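(* Let $p$ be a prime, let $n\geq p^2$ and let $D\subseteq\mathbb{F}_p^n$ be a set of size $|D|<\binom{n+p-2}{p-1}$. Then there exist disjoint sets $T_1,T_2\subseteq\mathbb{F}_p^n$ such that the $p$-dimensional rectangle $T_1\times T_2\times\cdots\times T_2$ contains at least $p^{2n+p-p^2}$ lines, but no lines with direction in $D$.
   Context: The line through $x\in\mathbb{F}_p^n$ in direction $d\in\mathbb{F}_p^n$ is the sequence $\ell_{x,d}=(x+\lambda d)_{\lambda\in\mathbb{F}_p}$ (lines are counted as pairs $(x,d)$). A rectangle $T_1\times\cdots\times T_p$ with $T_i\subseteq\mathbb{F}_p^n$ contains $\ell_{x,d}$ if $x+\lambda d\in T_{\lambda+1}$ for every $\lambda\in\{0,1,\dots,p-1\}$. *)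

From mathcomp Require Import all_boot all_order all_algebra.
Set Implicit Arguments. Unset Strict Implicit. Unset Printing Implicit Defensive.
Import GRing.Theory.
Local Open Scope ring_scope.

(* A rectangle T_1 x ... x T_p is a family T : 'I_p -> {set 'rV['F_p]_n},
   where T (i : 'I_p) plays the role of T_{i+1}.
   The line l_{x,d} = (x + lambda d)_{lambda in F_p} is contained in it iff
   x + lambda d \in T_{lambda+1} for every lambda in {0,...,p-1}. *)
Definition line_in_rect (p n : nat) (T : 'I_p -> {set 'rV['F_p]_n})
  (x d : 'rV['F_p]_n) : bool :=
  [forall l : 'I_p, x + ((nat_of_ord l)%:R : 'F_p) *: d \in T l].

Definition rect12 (p n : nat) (T1 T2 : {set 'rV['F_p]_n}) : 'I_p -> {set 'rV['F_p]_n} :=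
  fun i => if nat_of_ord i == 0%N then T1 else T2.

(* Number of lines (counted as pairs (x,d)) contained in the rectangle T. *)
Definition num_lines (p n : nat) (T : 'I_p -> {set 'rV['F_p]_n}) : nat :=
  #|[set xd : 'rV['F_p]_n * 'rV['F_p]_n | line_in_rect T xd.1 xd.2]|.

(* Pick a form f of degree p - 1 on F_p^n that vanishes on D but not everywhere:
   the C(n+p-2, p-1) monomials of degree p - 1 are linearly independent as
   functions (they are orthogonal to complementary monomials), and they
   outnumber the points of D.  Scale f so that f v = 1 somewhere and take
   T1 = {f = 0}, T2 = {f = 1}.  The line (x, d) lies in T1 x T2 x ... x T2 iff
   f (x + l d) = l ^ (p - 1) for every l.  Summing over l, the right side gives
   -1 while the left side gives -f d, since only the top homogeneous part of a
   polynomial of degree p - 1 survives; hence no direction of D occurs.  The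
   lines of the rectangle are the nonzeros of
   G (x, d) = prod_l (1 - (f (x + l d) - l ^ (p - 1)) ^ (p - 1)), a polynomial
   function of degree p (p - 1)^2 in 2n variables with G (0, v) = 1, and an
   Alon-Furedi type bound gives at least p ^ (2n - p (p - 1)) of them. *)

From mathcomp Require Import all_boot all_order all_algebra.
From mathcomp Require Import fingroup cyclic finfield zify ring.
Set Implicit Arguments. Unset Strict Implicit. Unset Printing Implicit Defensive.
Import GRing.Theory FinRing.Theory.
Local Open Scope ring_scope.

Lemma expSn_leq_mul m k : (k <= m)%N -> (m.+1 ^ k <= k.+1 * m ^ k)%N.
Proof.
elim: k => [|k IHk] km; first by rewrite !expn0.
have := IHk (ltnW km); rewrite !expnS.
move: (m.+1 ^ k)%N (m ^ k)%N => a b; nia.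
Qed.

Lemma expn_pred_swap m u : (0 < u <= m)%N -> (m ^ u.-1 <= u ^ m.-1)%N.
Proof.
case: u => [//|k] /= km; elim: m km => [//|m IHm] km.
have [->//|ne] := eqVneq k m.
have {}km : (k < m)%N by rewrite ltn_neqAle ne -ltnS km.
have := IHm km; have := expSn_leq_mul (ltnW km).
case: m {IHm ne} km => // m _ /=; rewrite expnS.
move: (m.+2 ^ k)%N (m.+1 ^ k)%N (k.+1 ^ m)%N => a b c; nia.
Qed.

Lemma leq_exp_pred_sub q t : (t < q)%N -> (q ^ q.-1 <= (q - t) ^ q.-1 * q ^ t)%N.
Proof.
move=> tq; have -> : (q ^ q.-1 = q ^ (q - t).-1 * q ^ t)%N.
  by rewrite -expnD; congr expn; lia.
by rewrite leq_mul2r expn_pred_swap ?orbT // subn_gt0 tq leq_subr.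
Qed.

Lemma prod_seq_count (R : comPzSemiRingType) (T : finType) (t : seq T) (G : T -> R) :
  \prod_(k <- t) G k = \prod_(k : T) G k ^+ count_mem k t.
Proof.
elim: t => [|a t IHt]; first by rewrite big_nil big1 // => k _; rewrite expr0.
rewrite big_cons IHt /=; under [RHS]eq_bigr do rewrite exprD.
rewrite big_split /=; congr (_ * _).
rewrite (bigD1 a) //= eqxx expr1 big1 ?mulr1 // => k /negbTE k_neq.
by rewrite eq_sym k_neq expr0.
Qed.

Lemma sum_count_mem (T : finType) (t : seq T) : (\sum_(k : T) count_mem k t)%N = size t.
Proof.
elim: t => [|a t IHt]; first by rewrite big1.
rewrite /= big_split /= IHt (bigD1 a) //= eqxx big1 // => k /negbTE k_neq.
by rewrite eq_sym k_neq.
Qed.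

Lemma sum_rV_prod (R : finComNzRingType) n (G : 'I_n -> R -> R) :
  \sum_(v : 'rV[R]_n) \prod_k G k (v 0 k) = \prod_k \sum_(y : R) G k y.
Proof.
rewrite bigA_distr_bigA /= (reindex (fun f : {ffun 'I_n -> R} => \row_k f k)) /=.
  by apply: eq_bigr => f _; apply: eq_bigr => k _; rewrite mxE.
exists (fun v : 'rV[R]_n => [ffun k => v 0 k]) => [f _|v _].
  by apply/ffunP => k; rewrite ffunE mxE.
by apply/rowP => k; rewrite mxE ffunE.
Qed.

Section FiniteField.
Variable F : finFieldType.
Local Notation q := #|F|.

Let q_gt1 : (1 < q)%N := finNzRing_gt1 F.

Lemma expf_card_pred (y : F) : y != 0 -> y ^+ q.-1 = 1.
Proof.
move=> y_neq0; apply: (mulIf y_neq0); rewrite mul1r -exprSr.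
by rewrite prednK ?expf_card // ltnW.
Qed.

(** * Power sums *)

Lemma natr_card : q%:R = 0 :> F.
Proof. by have := expg_cardG (in_setT (GRing.one F)); rewrite zmodXgE cardsT. Qed.

Lemma sum_expr_lt j : (j < q.-1)%N -> \sum_(y : F) y ^+ j = 0.
Proof.
move=> j_lt; have [->|j_gt0] := posnP j.
  by under eq_bigr do rewrite expr0; rewrite sumr_const natr_card.
have [a a_neq0 aj_neq1] : exists2 a : F, a != 0 & a ^+ j != 1.
  pose R := [set y : F | y ^+ j == 1].
  have card_R : (#|R| <= j)%N.
    have Xj_neq0 : ('X^j - 1 : {poly F}) != 0 by rewrite -size_poly_eq0 size_XnsubC.
    rewrite cardE -ltnS -(size_XnsubC (1 : F) j_gt0) max_poly_roots ?enum_uniq //.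
    by apply/allP => y; rewrite mem_enum inE rootE !hornerE subr_eq0.
  have /subsetPn[a] : ~~ ([set y : F | y != 0] \subset R).
    apply/negP => /subset_leq_card; rewrite (cardsE (predC1 0)) cardC1 => le_q_R.
    by move: (leq_trans le_q_R card_R) => /(leq_trans j_lt); rewrite ltnn.
  by rewrite /R !inE => a_neq0 aj_neq1; exists a.
have sum_scaled : \sum_(y : F) y ^+ j = a ^+ j * \sum_(y : F) y ^+ j.
  rewrite mulr_sumr (reindex_inj (mulfI a_neq0)) /=.
  by apply: eq_bigr => y _; rewrite exprMn.
have : (1 - a ^+ j) * \sum_(y : F) y ^+ j = 0 by rewrite mulrBl mul1r -sum_scaled subrr.
by move/eqP; rewrite mulf_eq0 subr_eq0 eq_sym (negbTE aj_neq1) => /eqP.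
Qed.

Lemma sum_expr_card_pred : \sum_(y : F) y ^+ q.-1 = -1.
Proof.
have q_pred_gt0 : (0 < q.-1)%N by rewrite -subn1 subn_gt0.
rewrite (bigD1 0) //= expr0n eqn0Ngt q_pred_gt0 add0r.
rewrite (eq_bigr (fun _ => 1)) => [|y]; last exact: expf_card_pred.
rewrite sumr_const (_ : #|_| = q.-1); last by rewrite -(cardC1 (0 : F)); apply: eq_card.
by apply/eqP; rewrite -addr_eq0 -mulrSr prednK ?natr_card // ltnW.
Qed.

Lemma sum_expr_prod_affine (I : Type) (t : seq I) (a b : I -> F) j :
  (j + size t <= q.-1)%N ->
  \sum_(y : F) y ^+ j * \prod_(i <- t) (a i + y * b i) =
  if (j + size t == q.-1)%N then - \prod_(i <- t) b i else 0.
Proof.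
elim: t j => [|i t IHt] j /=.
  rewrite addn0 => j_le; under eq_bigr do rewrite big_nil mulr1.
  have [->|j_neq] := eqVneq j q.-1; first by rewrite sum_expr_card_pred big_nil.
  by rewrite sum_expr_lt // ltn_neqAle j_neq.
move=> le_q; rewrite addnS -addSn.
transitivity ((\sum_(y : F) y ^+ j * \prod_(k <- t) (a k + y * b k)) * a i
    + (\sum_(y : F) y ^+ j.+1 * \prod_(k <- t) (a k + y * b k)) * b i).
  rewrite !mulr_suml -big_split /=; apply: eq_bigr => y _.
  by rewrite big_cons exprS; ring.
have le_q' : (j.+1 + size t <= q.-1)%N by rewrite addSn -addnS.
rewrite (IHt j) ?(IHt j.+1) ?(leq_trans (leqnSn _) le_q') //.
rewrite (_ : (j + size t == q.-1)%N = false); last by apply/negbTE; rewrite neq_ltn le_q'.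
by rewrite mul0r add0r big_cons; case: ifP; rewrite ?mul0r // mulNr mulrC.
Qed.

(** * Polynomial functions *)

Definition vcons N (y : F) (x : 'rV[F]_N) : 'rV[F]_(1 + N) := row_mx (const_mx y) x.

Lemma vconsK N (v : 'rV[F]_(1 + N)) : vcons (lsubmx v 0 0) (rsubmx v) = v.
Proof.
rewrite -[RHS]hsubmxK; congr row_mx; apply/matrixP => i j.
by rewrite !ord1 !mxE.
Qed.

Lemma vcons_head N y (x : 'rV[F]_N) : lsubmx (vcons y x) 0 0 = y.
Proof. by rewrite row_mxKl mxE. Qed.

Lemma vcons_tail N y (x : 'rV[F]_N) : rsubmx (vcons y x) = x.
Proof. exact: row_mxKr. Qed.

Fixpoint polyfun N : nat -> ('rV[F]_N -> F) -> Prop :=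
  match N with
  | 0 => fun _ _ => True
  | N'.+1 => fun d g => exists c : 'rV[F]_N' -> {poly F},
      [/\ forall x, (size (c x) <= d.+1)%N,
          forall j, polyfun (d - j) (fun x => (c x)`_j)
        & forall x y, g (vcons y x) = (c x).[y]]
  end.

Lemma polyfun_ext N d (g h : 'rV[F]_N -> F) :
  polyfun d g -> g =1 h -> polyfun d h.
Proof.
case: N g h => [//|N] g h [c [c_size c_coef gE]] gh.
by exists c; split=> // x y; rewrite -gh.
Qed.

Lemma polyfun_const N d (a : F) : polyfun (N:=N) d (fun _ => a).
Proof.
elim: N d a => [//|N IHN] d a; exists (fun _ => a%:P); split.
- by move=> x; rewrite size_polyC; case: (a != 0).
- by move=> j; apply: polyfun_ext (IHN _ (if j == 0%N then a else 0)) _ => x; rewrite coefC.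
- by move=> x y; rewrite hornerC.
Qed.

Lemma polyfunW N d d' (g : 'rV[F]_N -> F) :
  (d <= d')%N -> polyfun d g -> polyfun d' g.
Proof.
elim: N d d' g => [//|N IHN] d d' g dd' [c [c_size c_coef gE]].
exists c; split=> // [x|j]; first exact: leq_trans (c_size x) _.
by apply: IHN (c_coef j); apply: leq_sub2r.
Qed.

Lemma polyfunD N d (g h : 'rV[F]_N -> F) :
  polyfun d g -> polyfun d h -> polyfun d (fun v => g v + h v).
Proof.
elim: N d g h => [//|N IHN] d g h [c [c_size c_coef gE]] [e [e_size e_coef hE]].
exists (fun x => c x + e x); split.
- by move=> x; rewrite (leq_trans (size_polyD _ _)) // geq_max c_size e_size.
- by move=> j; apply: polyfun_ext (IHN _ _ _ (c_coef j) (e_coef j)) _ => x; rewrite coefD.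
- by move=> x y; rewrite hornerD gE hE.
Qed.

Lemma polyfun_sum N d (I : Type) (r : seq I) (P : pred I) (G : I -> 'rV[F]_N -> F) :
  (forall i, P i -> polyfun d (G i)) -> polyfun d (fun v => \sum_(i <- r | P i) G i v).
Proof.
move=> GP; elim: r => [|i r IHr].
  by apply: polyfun_ext (polyfun_const _ _ 0) _ => v; rewrite big_nil.
case Pi: (P i); last by apply: polyfun_ext IHr _ => v; rewrite big_cons Pi.
by apply: polyfun_ext (polyfunD (GP i Pi) IHr) _ => v; rewrite big_cons Pi.
Qed.

Lemma polyfunM N d1 d2 (g h : 'rV[F]_N -> F) :
  polyfun d1 g -> polyfun d2 h -> polyfun (d1 + d2) (fun v => g v * h v).
Proof.
elim: N d1 d2 g h => [//|N IHN] d1 d2 g h [c [c_size c_coef gE]] [e [e_size e_coef hE]].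
exists (fun x => c x * e x); split; last by move=> x y; rewrite hornerM gE hE.
  move=> x; apply: leq_trans (size_polyMleq _ _) _.
  by have := c_size x; have := e_size x; lia.
move=> j; apply: polyfun_ext (fun x => esym (coefM (c x) (e x) j)).
apply: polyfun_sum => i _.
have [d1i|lt_d1_i] := leqP i d1; last first.
  apply: polyfun_ext (polyfun_const _ _ 0) _ => x.
  by rewrite nth_default ?mul0r // (leq_trans (c_size x)).
have [d2i|lt_d2] := leqP (j - i) d2; last first.
  apply: polyfun_ext (polyfun_const _ _ 0) _ => x.
  by rewrite [(e x)`_ _]nth_default ?mulr0 // (leq_trans (e_size x)).
by apply: polyfunW (IHN _ _ _ _ (c_coef i) (e_coef (j - i)%N)); have := ltn_ord i; lia.
Qed.

Lemma polyfun_prod N (I : Type) (r : seq I) (P : pred I) (G : I -> 'rV[F]_N -> F)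
    (deg : I -> nat) :
  (forall i, P i -> polyfun (deg i) (G i)) ->
  polyfun (\sum_(i <- r | P i) deg i)%N (fun v => \prod_(i <- r | P i) G i v).
Proof.
move=> GP; elim: r => [|i r IHr].
  by rewrite big_nil; apply: polyfun_ext (polyfun_const _ _ 1) _ => v; rewrite big_nil.
rewrite big_cons; case Pi: (P i); last by apply: polyfun_ext IHr _ => v; rewrite big_cons Pi.
by apply: polyfun_ext (polyfunM (GP i Pi) IHr) _ => v; rewrite big_cons Pi.
Qed.

Lemma polyfun_coord N d (i : 'I_N) : (0 < d)%N -> polyfun d (fun v : 'rV[F]_N => v 0 i).
Proof.
elim: N d i => [|N IHN] d i d_gt0; first by case: i.
have [j ->|->] := unliftP ord0 i.
  exists (fun x => (x 0 j)%:P); split.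
  - by move=> x; rewrite size_polyC; case: (_ != 0).
  - move=> k; have [->|k_neq0] := eqVneq k 0%N.
      by rewrite subn0; apply: polyfun_ext (IHN _ j d_gt0) _ => x; rewrite coefC.
    by apply: polyfun_ext (polyfun_const _ _ 0) _ => x; rewrite coefC (negbTE k_neq0).
  - move=> x y; rewrite hornerC mxE; case: splitP => [k|k /= /eqP].
      by rewrite ord1 /=.
    by rewrite /bump /= add1n eqSS => /eqP/val_inj ->.
exists (fun _ => 'X); split.
- by move=> x; rewrite size_polyX.
- move=> k; apply: polyfun_ext (polyfun_const _ _ (k == 1%N)%:R) _ => x.
  by rewrite coefX.
- by move=> x y; rewrite hornerX mxE; case: splitP => // k _; rewrite mxE.
Qed.

Lemma polyfunX N d k (g : 'rV[F]_N -> F) :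
  polyfun d g -> polyfun (d * k) (fun v => g v ^+ k).
Proof.
move=> g_deg; elim: k => [|k IHk].
  by apply: polyfun_ext (polyfun_const _ _ 1) _ => v; rewrite expr0.
by rewrite mulnS; apply: polyfun_ext (polyfunM g_deg IHk) _ => v; rewrite exprS.
Qed.

(** * Counting nonzeros of a polynomial function *)

Definition nonzeros N (g : 'rV[F]_N -> F) := [set v | g v != 0].

Lemma card_nonzeros_vcons N (g : 'rV[F]_(1 + N) -> F) :
  #|nonzeros g| = (\sum_x #|[set y | g (vcons y x) != 0%R]|)%N.
Proof.
rewrite -sum1_card (reindex (fun xy : 'rV[F]_N * F => vcons xy.2 xy.1)) /=; last first.
  exists (fun v => (rsubmx v, lsubmx v 0 0)) => [[x y] _|v _]; last exact: vconsK.
  by rewrite vcons_head vcons_tail.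
under [RHS]eq_bigr => x _ do rewrite -sum1_card.
by rewrite pair_big_dep; apply: eq_bigl => -[x y]; rewrite !inE.
Qed.

Definition reduce_exp j := if j == 0%N then 0%N else (j.-1 %% q.-1).+1.

Lemma reduce_exp_lt j : (reduce_exp j < q)%N.
Proof.
have := q_gt1; rewrite /reduce_exp; case: eqP => _; first lia.
by have := @ltn_pmod j.-1 q.-1; lia.
Qed.

Lemma reduce_exp_le j : (reduce_exp j <= j)%N.
Proof.
rewrite /reduce_exp; case: eqP => // /eqP j_neq0.
by have := leq_mod j.-1 q.-1; lia.
Qed.

Lemma exprf_reduce (y : F) j : y ^+ j = y ^+ reduce_exp j.
Proof.
rewrite /reduce_exp; case: eqP => [->//|/eqP j_neq0].
rewrite -{1}(prednK (_ : 0 < j)%N) ?lt0n // {1}(divn_eq j.-1 q.-1).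
have [->|y_neq0] := eqVneq y 0; first by rewrite !expr0n.
by rewrite -addnS exprD mulnC exprM expf_card_pred // expr1n mul1r.
Qed.

(* Reduction of the first variable modulo y ^+ q = y. *)
Lemma polyfun_reduced N d (g : 'rV[F]_N.+1 -> F) : polyfun d g ->
  exists c : 'rV[F]_N -> {poly F},
    [/\ forall x, (size (c x) <= minn q d.+1)%N,
        forall j, polyfun (d - j) (fun x => (c x)`_j)
      & forall x y, g (vcons y x) = (c x).[y]].
Proof.
move=> [c [c_size c_coef gE]].
pose e i x := \sum_(j < d.+1 | reduce_exp j == i) (c x)`_j.
have reduce_lt (j : 'I_d.+1) : (reduce_exp j < minn q d.+1)%N.
  by rewrite leq_min reduce_exp_lt (leq_ltn_trans (reduce_exp_le j)).
exists (fun x => \poly_(i < minn q d.+1) e i x); split.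
- by move=> x; apply: size_poly.
- move=> i; have [i_lt|i_ge] := ltnP i (minn q d.+1); last first.
    by apply: polyfun_ext (polyfun_const _ _ 0) _ => x; rewrite coef_poly ltnNge i_ge.
  apply: polyfun_ext (_ : polyfun (d - i) (e i)) _ => [|x]; last by rewrite coef_poly i_lt.
  apply: polyfun_sum => j /eqP <-; apply: polyfunW (c_coef j).
  exact/leq_sub2l/reduce_exp_le.
- move=> x y; rewrite gE (horner_coef_wide _ (c_size x)) horner_poly.
  under eq_bigr => j _ do rewrite exprf_reduce.
  under [RHS]eq_bigr => i _ do rewrite mulr_suml.
  rewrite (exchange_big_dep xpredT) //=; apply: eq_bigr => j _.
  rewrite (bigD1 (Ordinal (reduce_lt j))) //= big1 ?addr0 // => i /andP[/eqP ji].
  by case/eqP; apply/val_inj; rewrite /= ji.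
Qed.

Lemma card_nonroots (P : {poly F}) :
  P != 0 -> (q - (size P).-1 <= #|[set y | ~~ root P y]|)%N.
Proof.
move=> P_neq0; have roots_le : (#|[set y | root P y]| <= (size P).-1)%N.
  rewrite cardE -ltnS (leq_trans (max_poly_roots P_neq0 _ (enum_uniq _))) //.
    by apply/allP => y; rewrite mem_enum inE.
  exact: leqSpred.
have -> : [set y | ~~ root P y] = ~: [set y | root P y] by apply/setP => y; rewrite !inE.
by rewrite -(cardsC [set y | root P y]) leq_subLR leq_add2r.
Qed.

Lemma card_nonzeros_coef N (g : 'rV[F]_(1 + N) -> F) (c : 'rV[F]_N -> {poly F}) t :
  (forall x, (size (c x) <= t.+1)%N) -> (forall x y, g (vcons y x) = (c x).[y]) ->
  ((q - t) * #|nonzeros (fun x => ((c x)`_t)%R)| <= #|nonzeros g|)%N.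
Proof.
move=> c_size gE; rewrite card_nonzeros_vcons mulnC -sum_nat_const.
rewrite [X in (_ <= X)%N](bigID (mem (nonzeros (fun x => (c x)`_t)))) /=.
apply: leq_trans (leq_addr _ _); apply: leq_sum => x; rewrite inE => ct_neq0.
have c_neq0 : c x != 0 by apply: contraNneq ct_neq0 => ->; rewrite coef0.
have t_lt : (t < size (c x))%N.
  by rewrite ltnNge; apply: contra ct_neq0 => /(nth_default 0) ->.
have -> : t = (size (c x)).-1 by have := c_size x; lia.
have -> : [set y | g (vcons y x) != 0] = [set y | ~~ root (c x) y].
  by apply/setP => y; rewrite !inE gE.
exact: card_nonroots.
Qed.

Theorem polyfun_card_nonzeros N d (g : 'rV[F]_N -> F) :
  polyfun d g -> (exists v, g v != 0) ->
  (q ^ (N * q.-1) <= #|nonzeros g| ^ q.-1 * q ^ d)%N.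
Proof.
elim: N d g => [|N IHN] d g.
  move=> _ [v gv_neq0]; rewrite mul0n expn0 muln_gt0 !expn_gt0 (ltnW q_gt1) andbT.
  by apply/orP; left; apply/card_gt0P; exists v; rewrite inE.
move=> /polyfun_reduced[c [c_size c_coef gE]] [v0 gv0_neq0].
pose x1 := rsubmx (v0 : 'rV_(1 + N)).
have [x0 _ x0_max] := @arg_maxnP _ x1 xpredT (fun x => size (c x)) isT.
have c1_neq0 : c x1 != 0.
  by apply: contraNneq gv0_neq0 => c0; rewrite -[v0]vconsK gE c0 horner0.
have size_x0_gt0 : (0 < size (c x0))%N.
  by apply: leq_trans (x0_max x1 isT); rewrite size_poly_gt0.
set t := (size (c x0)).-1.
have c_size_max x : (size (c x) <= t.+1)%N by rewrite prednK //; exact: x0_max.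
have ct_x0 : (c x0)`_t != 0.
  by rewrite -lead_coefE lead_coef_eq0 -size_poly_gt0.
have [t_lt_q t_le_d] : (t < q)%N /\ (t <= d)%N.
  by have := c_size x0; rewrite leq_min; lia.
have IH := IHN _ _ (c_coef t) (ex_intro _ x0 ct_x0).
have count_g := card_nonzeros_coef c_size_max gE.
rewrite mulSn expnD; apply: leq_trans (leq_mul (leq_exp_pred_sub t_lt_q) IH) _.
rewrite mulnACA -expnMn -expnD subnKC // leq_mul2r leq_exp2r ?count_g ?orbT //.
by rewrite -subn1 subn_gt0.
Qed.

(** * Forms of degree q - 1 *)

Section Forms.
Variables (n : nat) (I : finType) (s : I -> seq 'I_n).

Definition form (w : I -> F) (v : 'rV[F]_n) : F := \sum_i w i * \prod_(k <- s i) v 0 k.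

Hypothesis s_size : forall i, size (s i) = q.-1.

Lemma formZ w y v : form w (y *: v) = y ^+ q.-1 * form w v.
Proof.
rewrite /form mulr_sumr; apply: eq_bigr => i _; rewrite mulrCA -(s_size i).
congr (_ * _); elim: (s i) => [|k t IHt]; first by rewrite !big_nil mulr1.
by rewrite !big_cons IHt /= mxE exprS; ring.
Qed.

Lemma sum_form_line w x d : \sum_(y : F) form w (x + y *: d) = - form w d.
Proof.
rewrite /form exchange_big /= -sumrN; apply: eq_bigr => i _.
rewrite -mulr_sumr -mulrN; congr (_ * _).
have := @sum_expr_prod_affine _ (s i) (fun k => x 0 k) (fun k => d 0 k) 0.
rewrite add0n s_size eqxx => /(_ (leqnn _)) <-.
by apply: eq_bigr => y _; rewrite expr0 mul1r; apply: eq_bigr => k _; rewrite !mxE.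
Qed.

Definition dual_monomial (t : seq 'I_n) (v : 'rV[F]_n) : F :=
  \prod_k v 0 k ^+ (q.-1 - count_mem k t).

Lemma sum_monomial_dual (t t0 : seq 'I_n) : size t = q.-1 -> size t0 = q.-1 ->
  \sum_(v : 'rV[F]_n) (\prod_(k <- t) v 0 k) * dual_monomial t0 v =
  if perm_eq t t0 then (-1) ^+ n else 0.
Proof.
move=> t_size t0_size.
under eq_bigr do rewrite prod_seq_count /dual_monomial -big_split /=.
rewrite (sum_rV_prod (fun k y => y ^+ count_mem k t * y ^+ (q.-1 - count_mem k t0))).
under eq_bigr do under eq_bigr do rewrite -exprD.
have [t_perm|t_nperm] := ifPn.
  rewrite (eq_bigr (fun _ => -1)) ?prodr_const ?card_ord // => k _.
  rewrite (permP t_perm (pred1 k)) subnKC ?sum_expr_card_pred // -t0_size.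
  exact: count_size.
have [k lt_k] : exists k, (count_mem k t < count_mem k t0)%N.
  apply/existsP; apply: contraNT t_nperm; rewrite negb_exists => /forallP le_t0.
  have {}le_t0 k : (count_mem k t0 <= count_mem k t)%N by rewrite leqNgt le_t0.
  have := @sumnB _ (index_enum 'I_n) xpredT _ _ (fun k _ => le_t0 k).
  rewrite !sum_count_mem t_size t0_size subnn => /eqP; rewrite sum_nat_eq0 => /forallP eq0.
  apply/allP => u _ /=; rewrite eqn_leq le_t0 andbT -subn_eq0; exact: eq0.
rewrite (bigD1 k) //= sum_expr_lt ?mul0r //.
move: lt_k (count_size (pred1 k) t0); rewrite t0_size /=.
move: (count_mem k t) (count_mem k t0) (q.-1) => a b m; lia.
Qed.

Hypothesis s_perm_inj : forall i j, perm_eq (s i) (s j) -> i = j.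

Lemma form_eq0_coef w : (forall v, form w v = 0) -> forall i, w i = 0.
Proof.
move=> form_eq0 i; suff : w i * (-1) ^+ n = 0.
  by move/eqP; rewrite mulf_eq0 signr_eq0 orbF => /eqP.
transitivity (\sum_v form w v * dual_monomial (s i) v).
  rewrite /form; under eq_bigr do rewrite mulr_suml.
  rewrite exchange_big (bigD1 i) //= [X in _ + X]big1 => [|j j_neq_i].
    under eq_bigr do rewrite -mulrA.
    by rewrite -mulr_sumr sum_monomial_dual ?perm_refl ?addr0.
  under eq_bigr do rewrite -mulrA.
  rewrite -mulr_sumr sum_monomial_dual ?ifN ?mulr0 //.
  by apply: contra j_neq_i => /s_perm_inj ->.
by rewrite big1 // => v _; rewrite form_eq0 mul0r.
Qed.

End Forms.

Lemma form_scale n (I : finType) (s : I -> seq 'I_n) w c v :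
  form s (fun i => w i * c) v = form s w v * c.
Proof. by rewrite /form mulr_suml; apply: eq_bigr => i _; rewrite mulrAC. Qed.

Lemma formB n (I : finType) (s : I -> seq 'I_n) w1 w2 v :
  form s (fun i => w1 i - w2 i) v = form s w1 v - form s w2 v.
Proof. by rewrite /form -sumrB; apply: eq_bigr => i _; rewrite mulrBl. Qed.

(* The monomials of degree q - 1 are indexed by nondecreasing sequences of
   variables; there are more of them than points of D, so by pigeonhole two
   distinct forms agree on D. *)
Lemma exists_form_vanishing n (D : {set 'rV[F]_n.+1}) :
  (#|D| < 'C(q.-1 + n, q.-1))%N ->
  exists (I : finType) (s : I -> seq 'I_n.+1) (w : I -> F),
    [/\ forall i, size (s i) = q.-1, forall d, d \in D -> form s w d = 0
      & exists v, form s w v = 1].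
Proof.
move=> card_D.
pose I : finType := {t : (q.-1).-tuple 'I_n.+1 | sorted leq (map val t)}.
pose s (i : I) : seq 'I_n.+1 := val (val i).
have s_size i : size (s i) = q.-1 by rewrite size_tuple.
have s_perm_inj i j : perm_eq (s i) (s j) -> i = j.
  move=> /(perm_map val) s_ij; apply/val_inj/val_inj/(inj_map val_inj).
  exact: (sorted_eq leq_trans anti_leq (valP i) (valP j) s_ij).
have card_I : #|I| = 'C(q.-1 + n, q.-1).
  by rewrite card_sig -card_sorted_tuples; apply: eq_card => t; rewrite inE.
pose restrict (w : {ffun I -> F}) := [ffun d : {d | d \in D} => form s w (val d)].
have /injectivePn[w1 [w2 w12 eq_restrict]] : ~~ injectiveb restrict.
  apply/injectiveP => /leq_card; rewrite !card_ffun card_I card_sig leq_exp2l //.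
  by rewrite leqNgt (leq_trans _ card_D) // ltnS; apply: subset_leq_card; apply/subsetP.
pose w i := w1 i - w2 i.
have [v form_v] : exists v, form s w v != 0.
  apply/existsP; apply: contraNT w12 => /existsPn form_w0.
  apply/eqP/ffunP => i; apply/subr0_eq.
  by apply: (form_eq0_coef s_size s_perm_inj (w := w)) => u; apply/eqP/negbNE/form_w0.
exists I, s, (fun i => w i * (form s w v)^-1); split => //.
  move=> d dD; rewrite form_scale formB.
  move/ffunP/(_ (exist _ d dD)): eq_restrict; rewrite !ffunE /= => ->.
  by rewrite subrr mul0r.
by exists v; rewrite form_scale divff.
Qed.

Lemma polyfun_form_line n (I : finType) (s : I -> seq 'I_n) w k (y : F) :
  (forall i, size (s i) = k) ->
  polyfun k (fun v : 'rV[F]_(n + n) => form s w (lsubmx v + y *: rsubmx v)).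
Proof.
move=> s_size; apply: polyfun_sum => i _.
have coord_deg1 (j : 'I_n) :
    polyfun 1 (fun v : 'rV[F]_(n + n) => (lsubmx v + y *: rsubmx v) 0 j).
  apply: polyfun_ext (polyfunD (polyfun_coord (lshift n j) (ltnSn 0))
      (polyfunM (polyfun_const _ 0 y) (polyfun_coord (rshift n j) (ltnSn 0)))) _.
  by move=> v; rewrite !mxE.
have := polyfun_prod (s i) (P := xpredT) (fun j _ => coord_deg1 j).
by rewrite sum1_size s_size => /(polyfunM (polyfun_const _ 0 (w i))).
Qed.

End FiniteField.

(** * Lines in rectangles over F_p *)

Section PrimeField.
Variable p : nat.
Hypothesis p_pr : prime p.
Local Notation F := 'F_p.

Lemma Fp_val_lt (y : F) : (val y < p)%N.
Proof. by have := ltn_ord y; rewrite [X in (_ < X)%N -> _](Fp_cast p_pr). Qed.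

Lemma Fp_natr_val (y : F) : (val y)%:R = y.
Proof. by apply: val_inj; rewrite /= (val_Fp_nat p_pr) modn_small // Fp_val_lt. Qed.

Lemma Fp_natr_eq0 (l : 'I_p) : ((l%:R : F) == 0) = (l == 0%N :> nat).
Proof. by rewrite -val_eqE /= (val_Fp_nat p_pr) modn_small. Qed.

Lemma Fp_expr_pred (y : F) : y ^+ p.-1 = (y != 0)%:R.
Proof.
have [->|y_neq0] := eqVneq y 0; last by have := expf_card_pred y_neq0; rewrite card_Fp.
by rewrite expr0n; have := prime_gt1 p_pr; case: (p) => [|[|]].
Qed.

Lemma Fp_indicator (z : F) : 1 - z ^+ p.-1 = (z == 0)%:R.
Proof. by rewrite Fp_expr_pred; case: eqP; rewrite ?subr0 ?subrr. Qed.

Definition level_rect n (f : 'rV[F]_n -> F) := rect12 [set v | f v == 0] [set v | f v == 1].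

Lemma line_in_level_rect n (f : 'rV[F]_n -> F) x d :
  line_in_rect (level_rect f) x d = [forall y : F, f (x + y *: d) == y ^+ p.-1].
Proof.
apply/forallP/forallP => line_in.
  move=> y; have := line_in (Ordinal (Fp_val_lt y)); rewrite /level_rect /rect12 /= Fp_natr_val.
  have -> : (val y == 0%N) = (y == 0) by [].
  by rewrite Fp_expr_pred; case: eqP; rewrite inE.
move=> l; have := line_in l%:R; rewrite Fp_expr_pred Fp_natr_eq0 /level_rect /rect12.
by case: ifP; rewrite inE.
Qed.

Lemma level_rect_no_line n (f : 'rV[F]_n -> F) x d :
  \sum_(y : F) f (x + y *: d) = - f d -> f d = 0 -> ~~ line_in_rect (level_rect f) x d.
Proof.
move=> sum_line fd0; rewrite line_in_level_rect; apply/negP => /forallP on_line.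
have : \sum_(y : F) f (x + y *: d) = \sum_(y : F) y ^+ p.-1.
  by apply: eq_bigr => y _; apply/eqP/on_line.
have := sum_expr_card_pred F; rewrite card_Fp // => ->.
by rewrite sum_line fd0 oppr0 => /eqP; rewrite eq_sym oppr_eq0 oner_eq0.
Qed.

Definition line_indicator n (f : 'rV[F]_n -> F) (v : 'rV[F]_(n + n)) : F :=
  \prod_(y : F) (1 - (f (lsubmx v + y *: rsubmx v) - y ^+ p.-1) ^+ p.-1).

Lemma line_indicator_neq0 n (f : 'rV[F]_n -> F) v :
  (line_indicator f v != 0) = line_in_rect (level_rect f) (lsubmx v) (rsubmx v).
Proof.
rewrite line_in_level_rect; apply/prodf_neq0/forallP => [on_line y | on_line y _].
  by have := on_line y isT; rewrite Fp_indicator subr_eq0; case: (f _ == _).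
by rewrite Fp_indicator subr_eq0 on_line oner_eq0.
Qed.

Lemma polyfun_line_indicator n (I : finType) (s : I -> seq 'I_n) w :
  (forall i, size (s i) = p.-1) ->
  polyfun (p * (p.-1 * p.-1)) (line_indicator (form s w)).
Proof.
move=> s_size; rewrite -[X in (X * _)%N](card_Fp p_pr) -sum_nat_const.
apply: polyfun_prod => y _.
have := polyfunD (polyfun_form_line w y s_size) (polyfun_const _ _ (- y ^+ p.-1)).
move=> /(polyfunX p.-1) /(polyfunM (polyfun_const _ 0 (-1))).
move=> /(polyfunD (polyfun_const _ _ 1)); rewrite add0n => /polyfun_ext; apply => v.
by rewrite mulN1r.
Qed.

Lemma num_lines_ge_nonzeros n (f : 'rV[F]_n -> F) :
  (#|nonzeros (line_indicator f)| <= num_lines (level_rect f))%N.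
Proof.
have split_inj : injective (fun v : 'rV[F]_(n + n) => (lsubmx v, rsubmx v)).
  by move=> a b [] eq_l eq_r; rewrite -[a]hsubmxK -[b]hsubmxK eq_l eq_r.
rewrite /num_lines -(card_imset _ split_inj); apply: subset_leq_card.
apply/subsetP => _ /imsetP[v v_nz ->]; rewrite inE /= -line_indicator_neq0.
by rewrite inE in v_nz.
Qed.

Lemma level_rect_many_lines n (I : finType) (s : I -> seq 'I_n) w v1 :
  (p ^ 2 <= n)%N -> (forall i, size (s i) = p.-1) -> form s w v1 = 1 ->
  (p ^ (2 * n + p - p ^ 2) <= num_lines (level_rect (form s w)))%N.
Proof.
move=> pn s_size w_v1; have p_gt1 := prime_gt1 p_pr.
have s_size' i : size (s i) = #|F|.-1 by rewrite card_Fp.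
have nz_indicator : exists v, line_indicator (form s w) v != 0.
  exists (row_mx 0 v1); rewrite line_indicator_neq0 row_mxKl row_mxKr line_in_level_rect.
  by apply/forallP => y; rewrite add0r formZ // w_v1 mulr1 card_Fp.
have := polyfun_card_nonzeros (polyfun_line_indicator w s_size) nz_indicator.
rewrite card_Fp // => bound; apply: leq_trans (num_lines_ge_nonzeros _).
have exp_split : ((n + n) * p.-1 = (2 * n + p - p ^ 2) * p.-1 + p * (p.-1 * p.-1))%N.
  by move: pn p_gt1; rewrite expnS expn1; case: (p) => // k /=; nia.
move: bound; rewrite exp_split expnD expnM leq_pmul2r ?expn_gt0 ?(ltnW p_gt1) //.
by rewrite leq_exp2r // -ltnS prednK ?(ltnW p_gt1).
Qed.

End PrimeField.

Theorem theorem3p3 (p n : nat) (D : {set 'rV['F_p]_n}) :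
  prime p -> (p ^ 2 <= n)%N -> (#|D| < 'C(n + p - 2, p - 1))%N ->
  exists T1 T2 : {set 'rV['F_p]_n},
    [disjoint T1 & T2] /\
    (p ^ (2 * n + p - p ^ 2) <= num_lines (@rect12 p n T1 T2))%N /\
    (forall x d : 'rV['F_p]_n, d \in D -> ~~ line_in_rect (@rect12 p n T1 T2) x d).
Proof.
move=> p_pr pn card_D; have p_gt1 := prime_gt1 p_pr.
case: n D pn card_D => [|n] D pn card_D; first by move: pn; rewrite leqn0 expn_eq0; lia.
have card_D' : (#|D| < 'C(#|'F_p|.-1 + n, #|'F_p|.-1))%N.
  rewrite card_Fp //; have -> : (p.-1 + n = n.+1 + p - 2)%N by lia.
  by have -> : p.-1 = (p - 1)%N by lia.
have [I [s [w [s_size w_D [v1 w_v1]]]]] := exists_form_vanishing card_D'.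
have s_size_p i : size (s i) = p.-1 by rewrite s_size card_Fp.
exists [set v | form s w v == 0], [set v | form s w v == 1]; split; [|split].
- rewrite disjoint_subset; apply/subsetP => v; rewrite !inE => /eqP ->.
  by rewrite eq_sym oner_eq0.
- exact: level_rect_many_lines s_size_p w_v1.
- move=> x d dD; apply: (level_rect_no_line p_pr _ (w_D d dD)).
  exact: sum_form_line s_size w x d.
Qed.
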